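(* Let $F_1,F_2\in\mathbb C^{(2n+m)\times(n+m)}$ be nonzero, $\alpha:=\|F_1\|_2$, $\beta:=\|F_2\|_2$, and $g(\gamma):=\big\|[\,\gamma F_1,\ F_2/\gamma\,]\big\|_2^2$ for $\gamma>0$. Then in the minimization problem $\min_{0<\gamma<\infty}g(\gamma)$ the infinite search interval can be replaced by the closed interval $[\gamma_{lo},\gamma_{up}]=\big[\sqrt{\beta/(2\alpha)},\sqrt{2\beta/\alpha}\big]$, i.e. $\inf_{\gamma>0}g(\gamma)=\min_{\gamma\in[\gamma_{lo},\gamma_{up}]}g(\gamma)$. Moreover, $g(\gamma^{gm})$ with $\gamma^{gm}:=\sqrt{\beta/\alpha}$ is an upper bound for this minimum.
   Context: $\|\cdot\|_2$ denotes the spectral norm (largest singular value); $[\,\gamma F_1,\ F_2/\gamma\,]$ is the horizontal concatenation of the two matrices. *)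

From HB Require Import structures.
From mathcomp Require Import all_boot all_order all_algebra.
From mathcomp Require Import complex.
From mathcomp Require Import classical_sets boolp reals.
Set Implicit Arguments. Unset Strict Implicit. Unset Printing Implicit Defensive.
Import Order.TTheory GRing.Theory Num.Theory.
Local Open Scope ring_scope.
Local Open Scope classical_set_scope.

Definition vnorm (R : realType) (k : nat) (x : 'cV[R[i]]_k) : R :=
  Num.sqrt (\sum_(j < k) (complex.Re (x j 0) ^+ 2 + complex.Im (x j 0) ^+ 2)).

Definition specnorm (R : realType) (p q : nat) (A : 'M[R[i]]_(p, q)) : R :=
  sup [set vnorm (A *m x) | x in [set x : 'cV[R[i]]_q | vnorm x <= 1]].

Definition rC (R : realType) (r : R) : R[i] := complex.Complex r 0.

(* Write alpha = ||F1||, beta = ||F2|| and N(t) = ||[t F1, F2 / t]||.  The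
   blocks are submatrices and ||[A, B]||^2 <= ||A||^2 + ||B||^2, so
   max (t alpha, beta / t) <= N(t) <= sqrt ((t alpha)^2 + (beta / t)^2).
   At the geometric mean t = sqrt (beta / alpha) both upper terms equal
   alpha beta, so g = N^2 is at most 2 alpha beta there; below
   sqrt (beta / (2 alpha)) the term beta / t alone, and above
   sqrt (2 beta / alpha) the term t alpha alone, already push g above
   2 alpha beta.  As N is continuous on (0, oo), g attains its minimum on the
   compact bracket, and this minimum beats every value outside it. *)

From mathcomp Require Import all_boot all_order all_algebra.
From mathcomp Require Import complex.
From mathcomp Require Import classical_sets reals topology normedtype derive.
From mathcomp Require Import ring lra.
Import Order.TTheory GRing.Theory Num.Theory.
Import numFieldNormedType.Exports.
Set Implicit Arguments. Unset Strict Implicit. Unset Printing Implicit Defensive.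
Local Open Scope ring_scope.
Local Open Scope classical_set_scope.

Section VectorNorm.
Variable R : realType.
Implicit Types (k : nat) (z : R[i]).

Definition sqmodc z : R := complex.Re z ^+ 2 + complex.Im z ^+ 2.

Lemma sqmodc_ge0 z : 0 <= sqmodc z.
Proof. by rewrite addr_ge0 ?sqr_ge0. Qed.

Lemma sqmodcM z w : sqmodc (z * w) = sqmodc z * sqmodc w.
Proof. by case: z w => [a b] [c d]; rewrite /sqmodc /=; ring. Qed.

Lemma sqmodc_rC (r : R) : sqmodc (rC r) = r ^+ 2.
Proof. by rewrite /sqmodc /= expr0n addr0. Qed.

Lemma sqmodc_eq0 z : (sqmodc z == 0) = (z == 0).
Proof.
case: z => a b; rewrite /sqmodc /= paddr_eq0 ?sqr_ge0 // !sqrf_eq0.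
by rewrite eq_complex.
Qed.

Definition vnorm2 k (x : 'cV[R[i]]_k) : R := \sum_(j < k) sqmodc (x j 0).

Definition vdot k (x y : 'cV[R[i]]_k) : R :=
  \sum_(j < k) (complex.Re (x j 0) * complex.Re (y j 0)
                + complex.Im (x j 0) * complex.Im (y j 0)).

Variable k : nat.
Implicit Types x y : 'cV[R[i]]_k.

Lemma vnormE x : vnorm x = Num.sqrt (vnorm2 x).
Proof. by []. Qed.

Lemma vnorm2_ge0 x : 0 <= vnorm2 x.
Proof. by apply: sumr_ge0 => j _; apply: sqmodc_ge0. Qed.

Lemma vnorm_ge0 x : 0 <= vnorm x.
Proof. exact: sqrtr_ge0. Qed.

Lemma sqr_vnorm x : vnorm x ^+ 2 = vnorm2 x.
Proof. by rewrite vnormE sqr_sqrtr ?vnorm2_ge0. Qed.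

Lemma vnorm0 : vnorm (0 : 'cV[R[i]]_k) = 0.
Proof.
rewrite vnormE /vnorm2 big1 ?sqrtr0 // => j _.
by rewrite mxE; apply/eqP; rewrite sqmodc_eq0.
Qed.

Lemma vnorm_eq0 x : vnorm x = 0 -> x = 0.
Proof.
move=> /eqP; rewrite vnormE sqrtr_eq0 => x0.
have /psumr_eq0P x_eq0 : vnorm2 x = 0.
  by apply: le_anti; rewrite x0 vnorm2_ge0.
apply/matrixP => j l; rewrite (ord1 l) mxE; apply/eqP.
by rewrite -sqmodc_eq0 x_eq0 // => i _; apply: sqmodc_ge0.
Qed.

Lemma vnorm2D x y : vnorm2 (x + y) = vnorm2 x + vnorm2 y + 2 * vdot x y.
Proof.
rewrite /vnorm2 /vdot mulr_sumr -!big_split /=; apply: eq_bigr => j _.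
by rewrite mxE /sqmodc; case: (x j 0) (y j 0) => [a b] [c d] /=; ring.
Qed.

Lemma vdot_le_AMGM x y l : 0 < l -> 2 * vdot x y <= l * vnorm2 x + vnorm2 y / l.
Proof.
move=> l_gt0; rewrite /vnorm2 /vdot mulr_sumr !mulr_sumr mulr_suml -big_split /=.
apply: ler_sum => j _; rewrite /sqmodc.
case: (x j 0) (y j 0) => [a b] [c d] /=; rewrite -subr_ge0.
have -> : l * (a ^+ 2 + b ^+ 2) + (c ^+ 2 + d ^+ 2) / l - 2 * (a * c + b * d)
    = ((l * a - c) ^+ 2 + (l * b - d) ^+ 2) / l by field; rewrite gt_eqF.
by rewrite divr_ge0 ?addr_ge0 ?sqr_ge0 ?ltW.
Qed.

Lemma CauchySchwarz_vdot x y : vdot x y <= vnorm x * vnorm y.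
Proof.
have vdot0 (u v : 'cV[R[i]]_k) : u = 0 \/ v = 0 -> vdot u v = 0.
  move=> uv0; apply: big1 => j _.
  by case: uv0 => ->; rewrite mxE /= ?mul0r ?mulr0 addr0.
have [/vnorm_eq0 x0|x_neq0] := eqVneq (vnorm x) 0.
  by rewrite vdot0 ?mulr_ge0 ?vnorm_ge0 //; left.
have [/vnorm_eq0 y0|y_neq0] := eqVneq (vnorm y) 0.
  by rewrite vdot0 ?mulr_ge0 ?vnorm_ge0 //; right.
have x_gt0 : 0 < vnorm x by rewrite lt_def x_neq0 vnorm_ge0.
have y_gt0 : 0 < vnorm y by rewrite lt_def y_neq0 vnorm_ge0.
have := vdot_le_AMGM x y (divr_gt0 y_gt0 x_gt0); rewrite -!sqr_vnorm.
have -> : vnorm y / vnorm x * vnorm x ^+ 2 + vnorm y ^+ 2 / (vnorm y / vnorm x)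
    = 2 * (vnorm x * vnorm y) by field; rewrite !gt_eqF.
lra.
Qed.

Lemma vnormD x y : vnorm (x + y) <= vnorm x + vnorm y.
Proof.
rewrite -ler_sqr ?nnegrE ?addr_ge0 ?vnorm_ge0 //.
rewrite sqr_vnorm vnorm2D sqrrD !sqr_vnorm.
by have := CauchySchwarz_vdot x y; lra.
Qed.

Lemma vnormZ z x : vnorm (z *: x) = Num.sqrt (sqmodc z) * vnorm x.
Proof.
rewrite !vnormE -sqrtrM ?sqmodc_ge0 // /vnorm2 mulr_sumr.
by congr Num.sqrt; apply: eq_bigr => j _; rewrite mxE sqmodcM.
Qed.

Lemma vnormZr (r : R) x : vnorm (rC r *: x) = `|r| * vnorm x.
Proof. by rewrite vnormZ sqmodc_rC sqrtr_sqr. Qed.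

Lemma sqmodc_le_vnorm x j : Num.sqrt (sqmodc (x j 0)) <= vnorm x.
Proof.
rewrite vnormE ler_sqrt ?vnorm2_ge0 // /vnorm2 (bigD1 j) //= lerDl.
by apply: sumr_ge0 => i _; apply: sqmodc_ge0.
Qed.

Lemma vnorm_sum q (v : 'I_q -> 'cV[R[i]]_k) :
  vnorm (\sum_(j < q) v j) <= \sum_(j < q) vnorm (v j).
Proof.
elim/big_ind2: _ => [|a1 b1 a2 b2 h1 h2|//]; first by rewrite vnorm0.
exact: le_trans (vnormD _ _) (lerD h1 h2).
Qed.

End VectorNorm.

Lemma vnorm_col_mx (R : realType) k1 k2 (u : 'cV[R[i]]_k1) (d : 'cV[R[i]]_k2) :
  vnorm (col_mx u d) = Num.sqrt (vnorm u ^+ 2 + vnorm d ^+ 2).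
Proof.
rewrite vnormE !sqr_vnorm /vnorm2 big_split_ord; congr (Num.sqrt (_ + _)).
  by apply: eq_bigr => j _; rewrite col_mxEu.
by apply: eq_bigr => j _; rewrite col_mxEd.
Qed.

Section SpectralNorm.
Variable R : realType.
Variables p q : nat.
Implicit Types A B : 'M[R[i]]_(p, q).

Lemma vnorm_mulmx_le_colsum A x :
  vnorm (A *m x) <= (\sum_(j < q) vnorm (col j A)) * vnorm x.
Proof.
have -> : A *m x = \sum_(j < q) x j 0 *: col j A.
  apply/matrixP => i l; rewrite !mxE summxE; apply: eq_bigr => j _.
  by rewrite !mxE (ord1 l) mulrC.
rewrite (le_trans (vnorm_sum _)) // mulr_suml; apply: ler_sum => j _.
by rewrite vnormZ mulrC ler_wpM2l ?vnorm_ge0 ?sqmodc_le_vnorm.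
Qed.

Lemma specnorm_has_ubound A :
  has_ubound [set vnorm (A *m x) | x in [set x : 'cV[R[i]]_q | vnorm x <= 1]].
Proof.
exists (\sum_(j < q) vnorm (col j A)) => _ [x /= x_le1 <-].
apply: le_trans (vnorm_mulmx_le_colsum A x) _.
by rewrite ler_piMr ?sumr_ge0 // => j _; apply: vnorm_ge0.
Qed.

Lemma vnorm_mulmx_le_specnorm A x : vnorm x <= 1 -> vnorm (A *m x) <= specnorm A.
Proof. by move=> x_le1; apply: (ub_le_sup (specnorm_has_ubound A)); exists x. Qed.

Lemma specnorm_ge0 A : 0 <= specnorm A.
Proof.
apply: le_trans (vnorm_mulmx_le_specnorm A (x := 0) _); rewrite ?vnorm0 //.
exact: vnorm_ge0.
Qed.

Lemma specnorm_le A c :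
  (forall x, vnorm x <= 1 -> vnorm (A *m x) <= c) -> specnorm A <= c.
Proof.
move=> A_le; apply: ge_sup => [|_ [x /= x_le1 <-]]; last exact: A_le.
by exists (vnorm (A *m 0)), 0; rewrite //= vnorm0.
Qed.

Lemma vnorm_mulmx_le A x : vnorm (A *m x) <= specnorm A * vnorm x.
Proof.
have [/vnorm_eq0 ->|x_neq0] := eqVneq (vnorm x) 0.
  by rewrite mulmx0 !vnorm0 mulr0.
have x_gt0 : 0 < vnorm x by rewrite lt_def x_neq0 vnorm_ge0.
rewrite -ler_pdivrMr //.
have := vnorm_mulmx_le_specnorm A (x := rC (vnorm x)^-1 *: x).
rewrite -scalemxAr !vnormZr ger0_norm ?invr_ge0 ?vnorm_ge0 // mulVf //.
by rewrite lexx mulrC => /(_ isT).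
Qed.

Lemma specnormZr (c : R) A : specnorm (rC c *: A) = `|c| * specnorm A.
Proof.
apply/le_anti/andP; split.
  apply: specnorm_le => x x_le1; rewrite -scalemxAl vnormZr ler_wpM2l //.
  exact: vnorm_mulmx_le_specnorm.
have [->|c_neq0] := eqVneq c 0; first by rewrite normr0 mul0r specnorm_ge0.
rewrite mulrC -ler_pdivlMr ?normr_gt0 //; apply: specnorm_le => x x_le1.
rewrite ler_pdivlMr ?normr_gt0 // mulrC -vnormZr scalemxAl.
exact: vnorm_mulmx_le_specnorm.
Qed.

Lemma specnormD A B : specnorm (A + B) <= specnorm A + specnorm B.
Proof.
apply: specnorm_le => x x_le1; rewrite mulmxDl (le_trans (vnormD _ _)) //.
by rewrite lerD ?vnorm_mulmx_le_specnorm.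
Qed.

Lemma specnorm_gt0 A : A != 0 -> 0 < specnorm A.
Proof.
case/matrix0Pn => i [j Aij_neq0].
have ej_le1 : vnorm (delta_mx j 0 : 'cV[R[i]]_q) <= 1.
  rewrite vnormE -sqrtr1 ler_sqrt /vnorm2 ?ler01 // (bigD1 j) //=.
  rewrite big1 => [|l /negbTE l_neq_j].
    by rewrite !mxE !eqxx /sqmodc /= expr1n expr0n addr0 addr0.
  by rewrite mxE l_neq_j /sqmodc /= expr0n addr0.
apply: lt_le_trans (vnorm_mulmx_le_specnorm A ej_le1).
apply: lt_le_trans (sqmodc_le_vnorm _ i).
by rewrite -colE !mxE sqrtr_gt0 lt_def sqmodc_eq0 Aij_neq0 sqmodc_ge0.
Qed.

End SpectralNorm.

Section RowBlock.
Variable R : realType.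
Variables p q1 q2 : nat.
Variables (A : 'M[R[i]]_(p, q1)) (B : 'M[R[i]]_(p, q2)).

Lemma specnorm_row_mxl : specnorm A <= specnorm (row_mx A B).
Proof.
apply: specnorm_le => x x_le1.
rewrite -[A *m x]addr0 -(mulmx0 _ B) -mul_row_col vnorm_mulmx_le_specnorm //.
by rewrite vnorm_col_mx vnorm0 expr0n addr0 sqrtr_sqr ger0_norm ?vnorm_ge0.
Qed.

Lemma specnorm_row_mxr : specnorm B <= specnorm (row_mx A B).
Proof.
apply: specnorm_le => x x_le1.
rewrite -[B *m x]add0r -(mulmx0 _ A) -mul_row_col vnorm_mulmx_le_specnorm //.
by rewrite vnorm_col_mx vnorm0 expr0n add0r sqrtr_sqr ger0_norm ?vnorm_ge0.
Qed.

Lemma specnorm_row_mx_le :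
  specnorm (row_mx A B) <= Num.sqrt (specnorm A ^+ 2 + specnorm B ^+ 2).
Proof.
apply: specnorm_le => x; rewrite -[x]vsubmxK mul_row_col.
set u := usubmx x; set d := dsubmx x.
rewrite vnorm_col_mx -sqrtr1 ler_sqrt ?ler01 // => ud_le1.
apply: le_trans (vnormD _ _) _.
apply: le_trans (lerD (vnorm_mulmx_le A u) (vnorm_mulmx_le B d)) _.
have := specnorm_ge0 A; have := specnorm_ge0 B.
have := vnorm_ge0 u; have := vnorm_ge0 d.
set a := specnorm A; set b := specnorm B; set su := vnorm u; set sd := vnorm d.
move=> sd0 su0 b0 a0.
rewrite -ler_sqr ?nnegrE ?sqrtr_ge0 ?addr_ge0 ?mulr_ge0 //.
rewrite sqr_sqrtr ?addr_ge0 ?sqr_ge0 //.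
have -> : (a * su + b * sd) ^+ 2
    = (a ^+ 2 + b ^+ 2) * (su ^+ 2 + sd ^+ 2) - (a * sd - b * su) ^+ 2 by ring.
rewrite lerBlDr (le_trans (ler_wpM2l _ ud_le1)) ?addr_ge0 ?sqr_ge0 // mulr1.
by rewrite lerDl sqr_ge0.
Qed.

Lemma specnorm_row_mx_le_add : specnorm (row_mx A B) <= specnorm A + specnorm B.
Proof.
apply: le_trans specnorm_row_mx_le _.
have a0 := specnorm_ge0 A; have b0 := specnorm_ge0 B.
rewrite -ler_sqr ?nnegrE ?sqrtr_ge0 ?addr_ge0 // sqr_sqrtr ?addr_ge0 ?sqr_ge0 //.
by rewrite sqrrD; have := mulr_ge0 a0 b0; lra.
Qed.

End RowBlock.

Section ScaledRowBlock.
Variable R : realType.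
Variables p q1 q2 : nat.
Variables (F1 : 'M[R[i]]_(p, q1)) (F2 : 'M[R[i]]_(p, q2)).

Definition scaled_norm (t : R) := specnorm (row_mx (rC t *: F1) (rC t^-1 *: F2)).

Lemma scaled_norm_gel t : `|t| * specnorm F1 <= scaled_norm t.
Proof. by rewrite -specnormZr; apply: specnorm_row_mxl. Qed.

Lemma scaled_norm_ger t : `|t^-1| * specnorm F2 <= scaled_norm t.
Proof. by rewrite -specnormZr; apply: specnorm_row_mxr. Qed.

Lemma sqr_scaled_norm_le t :
  scaled_norm t ^+ 2 <= (`|t| * specnorm F1) ^+ 2 + (`|t^-1| * specnorm F2) ^+ 2.
Proof.
rewrite -!specnormZr -[leRHS]sqr_sqrtr ?addr_ge0 ?sqr_ge0 //.
by rewrite ler_pXn2r ?nnegrE ?specnorm_ge0 ?sqrtr_ge0 ?specnorm_row_mx_le.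
Qed.

Lemma scaled_norm_dist s t :
  `|scaled_norm s - scaled_norm t|
    <= `|s - t| * specnorm F1 + `|s^-1 - t^-1| * specnorm F2.
Proof.
have rCB (a b : R) : rC a - rC b = rC (a - b).
  by rewrite /rC; congr complex.Complex; rewrite /= subr0.
have diff_le (a b : R) : scaled_norm a - scaled_norm b
    <= `|a - b| * specnorm F1 + `|a^-1 - b^-1| * specnorm F2.
  rewrite /scaled_norm.
  have -> : row_mx (rC a *: F1) (rC a^-1 *: F2) =
      row_mx (rC (a - b) *: F1) (rC (a^-1 - b^-1) *: F2)
      + row_mx (rC b *: F1) (rC b^-1 *: F2).
    by rewrite add_row_mx -!rCB !scalerBl !subrK.
  rewrite lerBlDr; apply: le_trans (specnormD _ _) _; rewrite lerD2r.
  by apply: le_trans (specnorm_row_mx_le_add _ _) _; rewrite !specnormZr.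
rewrite ler_norml diff_le andbT lerNl opprB.
by rewrite distrC [`|s^-1 - _|]distrC diff_le.
Qed.

Lemma scaled_norm_continuous t : t != 0 -> {for t, continuous scaled_norm}.
Proof.
move=> t_neq0.
pose bound s := `|s - t| * specnorm F1 + `|s^-1 - t^-1| * specnorm F2.
have bound_cvg : bound s @[s --> t] --> 0.
  have <- : bound t = 0 by rewrite /bound !subrr normr0 !mul0r addr0.
  apply: cvgD; apply: cvgMr_tmp; apply: cvg_norm; apply: cvgB.
  - exact: cvg_id.
  - exact: cvg_cst.
  - exact: inv_continuous.
  - exact: cvg_cst.
apply: (@squeeze_cvgr _ _ _ _
  (fun s => scaled_norm t - bound s) (fun s => scaled_norm t + bound s)).
- near=> s; rewrite -ler_distlC distrC; exact: scaled_norm_dist.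
- by rewrite -[X in _ --> X]subr0; apply: cvgB => //; apply: cvg_cst.
- by rewrite -[X in _ --> X]addr0; apply: cvgD => //; apply: cvg_cst.
Unshelve. all: end_near.
Qed.

End ScaledRowBlock.

Section Bracket.
Variable R : realType.
Variables a b : R.
Hypotheses (a_gt0 : 0 < a) (b_gt0 : 0 < b).

Lemma two_mul_le_sqr_inv_mul t :
  0 < t -> t <= Num.sqrt (b / (2 * a)) -> 2 * a * b <= (t^-1 * b) ^+ 2.
Proof.
move=> t_gt0 t_le.
have t2_le : t ^+ 2 <= b / (2 * a).
  have ba_ge0 : 0 <= b / (2 * a) by rewrite divr_ge0 ?mulr_ge0 ?ltW.
  by rewrite -ler_sqrt // sqrtr_sqr ger0_norm // ltW.
rewrite exprMn exprVn [_ * b ^+ 2]mulrC ler_pdivlMr ?exprn_gt0 //.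
apply: le_trans (ler_wpM2l (ltW _) t2_le) _; first by rewrite !mulr_gt0.
by rewrite (_ : _ * (b / (2 * a)) = b ^+ 2) //; field; rewrite gt_eqF.
Qed.

Lemma two_mul_le_sqr_mul t :
  Num.sqrt (2 * b / a) <= t -> 2 * a * b <= (t * a) ^+ 2.
Proof.
move=> le_t.
have t_ge0 : 0 <= t by apply: le_trans le_t; apply: sqrtr_ge0.
have le_t2 : 2 * b / a <= t ^+ 2.
  by rewrite -ler_sqrt ?sqr_ge0 // sqrtr_sqr ger0_norm.
rewrite exprMn; apply: le_trans (ler_wpM2r (sqr_ge0 a) le_t2).
by rewrite (_ : 2 * b / a * a ^+ 2 = 2 * a * b) //; field; rewrite gt_eqF.
Qed.

Lemma sqr_geometric_mean_balance (t := Num.sqrt (b / a)) :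
  (t * a) ^+ 2 + (t^-1 * b) ^+ 2 = 2 * a * b.
Proof.
have ba_gt0 : 0 < b / a by rewrite divr_gt0.
rewrite !exprMn exprVn /t sqr_sqrtr ?ltW //; field; rewrite !gt_eqF //.
Qed.

Variable N : R -> R.
Hypothesis N_continuous : forall t, 0 < t -> {for t, continuous N}.
Hypothesis N_gel : forall t, 0 < t -> t * a <= N t.
Hypothesis N_ger : forall t, 0 < t -> t^-1 * b <= N t.
Hypothesis sqr_N_le :
  forall t, 0 < t -> N t ^+ 2 <= (t * a) ^+ 2 + (t^-1 * b) ^+ 2.

Let tlo := Num.sqrt (b / (2 * a)).
Let tup := Num.sqrt (2 * b / a).
Let tgm := Num.sqrt (b / a).

Lemma sqr_N_geometric_mean : N tgm ^+ 2 <= 2 * a * b.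
Proof.
by rewrite -sqr_geometric_mean_balance sqr_N_le // sqrtr_gt0 divr_gt0.
Qed.

Lemma sqr_N_outside t : 0 < t -> ~~ (tlo <= t <= tup) -> 2 * a * b <= N t ^+ 2.
Proof.
move=> t_gt0; have t_ge0 := ltW t_gt0.
have N_ge0 : 0 <= N t by apply: le_trans (N_gel t_gt0); rewrite mulr_ge0 // ltW.
rewrite negb_and -!ltNge => /orP[t_lt | t_gt].
  apply: le_trans (two_mul_le_sqr_inv_mul t_gt0 (ltW t_lt)) _.
  by rewrite ler_sqr ?nnegrE ?mulr_ge0 ?invr_ge0 ?N_ger // ltW.
apply: le_trans (two_mul_le_sqr_mul (ltW t_gt)) _.
by rewrite ler_sqr ?nnegrE ?mulr_ge0 ?N_gel // ltW.
Qed.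

Lemma sqr_min_in_bracket : exists tmin : R,
  [/\ tlo <= tmin <= tup,
      (forall t, 0 < t -> N tmin ^+ 2 <= N t ^+ 2),
      (forall t, tlo <= t <= tup -> N tmin ^+ 2 <= N t ^+ 2)
    & N tmin ^+ 2 <= N tgm ^+ 2].
Proof.
have ba_ge0 : 0 <= b / a by rewrite divr_ge0 // ltW.
have tlo_gt0 : 0 < tlo by rewrite sqrtr_gt0 divr_gt0 ?mulr_gt0.
have tlo_le_tgm : tlo <= tgm.
  rewrite ler_sqrt // ler_pM2l // lef_pV2 ?posrE ?mulr_gt0 //.
  by rewrite ler_peMl ?ler1n // ltW.
have tgm_le_tup : tgm <= tup.
  rewrite ler_sqrt; last by rewrite -mulrA mulr_ge0.
  by rewrite ler_pM2r ?invr_gt0 // ler_peMl ?ler1n // ltW.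
have sqrN_cont : {within `[tlo, tup], continuous (fun t => N t ^+ 2)}.
  apply: continuous_in_subspaceT => t; rewrite inE /= in_itv /= => /andP[t_ge _].
  have t_gt0 : 0 < t := lt_le_trans tlo_gt0 t_ge.
  exact: continuousM (N_continuous t_gt0) (N_continuous t_gt0).
have [tmin tmin_in tmin_min] :=
  EVT_min (le_trans tlo_le_tgm tgm_le_tup) sqrN_cont.
have tmin_le_tgm : N tmin ^+ 2 <= N tgm ^+ 2.
  by apply: tmin_min; rewrite in_itv /= tlo_le_tgm.
exists tmin; split=> [|t t_gt0|t t_in|//]; first by move: tmin_in; rewrite in_itv.
- have [t_in|t_out] := boolP (tlo <= t <= tup).
    by apply: tmin_min; rewrite in_itv.
  apply: le_trans tmin_le_tgm (le_trans sqr_N_geometric_mean _).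
  exact: sqr_N_outside.
- by apply: tmin_min; rewrite in_itv.
Qed.

End Bracket.

Theorem lemma10p1 (R : realType) (n m : nat)
  (F1 F2 : 'M[R[i]]_(2 * n + m, n + m)) :
  F1 != 0 -> F2 != 0 ->
  let alpha := specnorm F1 in
  let beta := specnorm F2 in
  let g := fun gamma : R =>
    specnorm (row_mx (rC gamma *: F1) (rC gamma^-1 *: F2)) ^+ 2 in
  let glo := Num.sqrt (beta / (2 * alpha)) in
  let gup := Num.sqrt (2 * beta / alpha) in
  let ggm := Num.sqrt (beta / alpha) in
  exists gmin : R,
    [/\ glo <= gmin <= gup,
        (forall gamma : R, 0 < gamma -> g gmin <= g gamma),
        (forall gamma : R, glo <= gamma <= gup -> g gmin <= g gamma)
      & g gmin <= g ggm].
Proof.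
move=> F1_neq0 F2_neq0; cbv zeta.
apply: (sqr_min_in_bracket (specnorm_gt0 F1_neq0) (specnorm_gt0 F2_neq0)
  (N := scaled_norm F1 F2)) => t t_gt0.
- exact/scaled_norm_continuous/lt0r_neq0.
- by have := scaled_norm_gel F1 F2 t; rewrite gtr0_norm.
- by have := scaled_norm_ger F1 F2 t; rewrite gtr0_norm ?invr_gt0.
- by have := sqr_scaled_norm_le F1 F2 t; rewrite !gtr0_norm ?invr_gt0.
Qed.
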